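(* Let $S$ be a closed connected oriented surface of genus $n\ge2$ and let $\chi\in H^1(S,\mathbb C)$ satisfy $\chi(H_1(S,\mathbb Z))=\mathbb Z+i\mathbb Z$ and $\omega(\chi)>0$. Then there is a symplectic basis $x_1,y_1,\dots,x_n,y_n$ of $H_1(S,\mathbb Z)$ such that $\chi(x_1)=\omega(\chi)$, $\chi(y_1)=i$, and for every $j=2,\dots,n$: $\chi(y_j)=0$ and $\chi(x_j)=a_j$ with $a_j$ an integer satisfying $0\le a_j<\omega(\chi)$.
   Context: A symplectic basis of $H_1(S,\mathbb Z)$ is a basis with intersection numbers $x_i\cdot y_j=\delta_{ij}$, $x_i\cdot x_j=y_i\cdot y_j=0$. $\omega(\chi):=\sum_{j=1}^n\mathrm{Im}(\overline{\chi(x_j)}\chi(y_j))$ for any symplectic basis (independent of the choice). *)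

From HB Require Import structures.
From mathcomp Require Import all_boot all_order all_algebra all_field.
Set Implicit Arguments. Unset Strict Implicit. Unset Printing Implicit Defensive.
Import Order.TTheory GRing.Theory Num.Theory.
Local Open Scope ring_scope.

(* Model of H_1(S,Z) for a closed connected oriented surface of genus n:
   the lattice Z^n x Z^n, where (u.1, u.2) are the coordinates with respect
   to a fixed (standard) symplectic basis e_1,f_1,...,e_n,f_n. *)
Definition H1 (n : nat) := ('rV[int]_n * 'rV[int]_n)%type.

Definition stdx (n : nat) (j : 'I_n) : H1 n := (\row_k ((k == j)%:R : int), 0).
Definition stdy (n : nat) (j : 'I_n) : H1 n := (0, \row_k ((k == j)%:R : int)).

Definition inter (n : nat) (u v : H1 n) : int :=
  \sum_(i < n) (u.1 0 i * v.2 0 i - u.2 0 i * v.1 0 i).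

Definition is_Zbasis (n : nat) (x y : 'I_n -> H1 n) : Prop :=
  forall v : H1 n, exists! c : 'rV[int]_n * 'rV[int]_n,
    v = \sum_(i < n) (x i *~ c.1 0 i + y i *~ c.2 0 i).

Definition is_symplectic_basis (n : nat) (x y : 'I_n -> H1 n) : Prop :=
  is_Zbasis x y /\
  (forall i j : 'I_n,
     inter (x i) (y j) = (i == j)%:R /\ inter (x i) (x j) = 0 /\
     inter (y i) (y j) = 0).

(* omega(chi) computed on the standard symplectic basis (it is independent of
   the symplectic basis). *)
Definition omega (n : nat) (chi : H1 n -> algC) : algC :=
  \sum_(j < n) 'Im ((chi (stdx j))^* * chi (stdy j)).

(* Write chi = alpha + i beta and record alpha, beta by the columns P, Q of
   their values on the standard basis; the rows of a symplectic integer matrix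
   M form a new symplectic basis, on which chi takes the values M P + i M Q,
   and omega(chi) = P^T J Q is invariant.  Surjectivity of chi onto Z[i] makes
   beta primitive, so coordinatewise SL2(Z) moves followed by two
   transvections send Q to the dual of y_1.  Fixing that, SL2(Z) moves on the
   other coordinate pairs make the x-part of P primitive, a symmetric shear
   then kills its y-part, and elementary moves x_j -> x_j + k x_1 reduce the
   values alpha(x_j), j > 1, modulo alpha(x_1) = omega(chi). *)

From HB Require Import structures.
From mathcomp Require Import all_boot all_order all_algebra all_field ring.
Import Order.TTheory GRing.Theory Num.Theory.
Local Open Scope ring_scope.

Section Symplectic.
Context {n : nat}.
Local Notation M2 := ('M[int]_(n + n)).
Local Notation V := ('cV[int]_(n + n)).

Definition Jmx : M2 := block_mx 0 1%:M (-1%:M) 0.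

Lemma mulJJ : Jmx *m Jmx = -1%:M.
Proof.
rewrite /Jmx mulmx_block !mulmx0 !mul0mx !mulmx1 !mul1mx !add0r !addr0.
by rewrite [in RHS]scalar_mx_block opp_block_mx oppr0.
Qed.

Lemma trmxJ : Jmx^T = - Jmx.
Proof.
by rewrite /Jmx tr_block_mx !trmx0 trmx1 linearN /= trmx1 opp_block_mx !oppr0 opprK.
Qed.

Lemma Jmx_col (X1 Y1 X2 Y2 : 'cV[int]_n) :
  (col_mx X1 Y1)^T *m Jmx *m col_mx X2 Y2 = X1^T *m Y2 - Y1^T *m X2.
Proof.
rewrite tr_col_mx -mulmxA /Jmx mul_block_col !mul0mx !mul1mx add0r addr0.
by rewrite mul_row_col mulNmx mul1mx mulmxN.
Qed.

Lemma Jmx_isotropic (w : V) : w^T *m Jmx *m w = 0.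
Proof.
set s := w^T *m Jmx *m w.
have s_skew : s^T = - s by rewrite /s !trmx_mul trmxK trmxJ mulNmx mulmxN mulmxA.
clearbody s.
have s00 : s 0 0 = 0.
  have e : s^T 0 0 = (- s) 0 0 by rewrite s_skew.
  rewrite !mxE in e.
  have : s 0 0 *+ 2 == 0 by rewrite mulr2n {1}e addNr.
  by rewrite mulrn_eq0 => /eqP.
by apply/matrixP => i j; rewrite !ord1 s00 mxE.
Qed.

Definition symplecticmx (M : M2) := M^T *m Jmx *m M = Jmx.

Lemma symplecticmx_mul M N :
  symplecticmx M -> symplecticmx N -> symplecticmx (M *m N).
Proof.
rewrite /symplecticmx trmx_mul => hM hN.
have -> : N^T *m M^T *m Jmx *m (M *m N) = N^T *m (M^T *m Jmx *m M) *m N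
  by rewrite !mulmxA.
by rewrite hM.
Qed.

Lemma symplecticmx_inv M : symplecticmx M -> (- (Jmx *m M^T *m Jmx)) *m M = 1%:M.
Proof.
move=> hM; rewrite mulNmx.
have -> : Jmx *m M^T *m Jmx *m M = Jmx *m (M^T *m Jmx *m M) by rewrite !mulmxA.
by rewrite hM mulJJ opprK.
Qed.

Lemma symplecticmx_unit M : symplecticmx M -> M \in unitmx.
Proof. by move=> /symplecticmx_inv /mulmx1_unit []. Qed.

Lemma symplecticmx_trmx M : symplecticmx M -> M *m Jmx *m M^T = Jmx.
Proof.
move=> /symplecticmx_inv /mulmx1C; rewrite mulmxN -!mulmxA => h.
have hX : M *m (Jmx *m (M^T *m Jmx)) = - 1%:M by rewrite -h opprK.
have := congr1 (mulmx^~ Jmx) hX; rewrite /= -!mulmxA mulJJ mulmxN mulmx1 mulNmx.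
by rewrite !mulmxN mul1mx => /oppr_inj; rewrite !mulmxA.
Qed.

Definition sform (P Q : V) : int := (P^T *m Jmx *m Q) 0 0.

Lemma sform_symplecticmx N P Q :
  symplecticmx N -> sform (N *m P) (N *m Q) = sform P Q.
Proof.
rewrite /sform trmx_mul => hN.
have -> : P^T *m N^T *m Jmx *m (N *m Q) = P^T *m (N^T *m Jmx *m N) *m Q
  by rewrite !mulmxA.
by rewrite hN.
Qed.

Definition onto2 (P Q : V) :=
  (exists c : 'rV[int]_(n + n), c *m P = 1%:M /\ c *m Q = 0) /\
  (exists c : 'rV[int]_(n + n), c *m P = 0 /\ c *m Q = 1%:M).

Lemma onto2_symplecticmx N P Q :
  symplecticmx N -> onto2 P Q -> onto2 (N *m P) (N *m Q).
Proof.
move=> /symplecticmx_unit N_unit [[c [cP cQ]] [c' [c'P c'Q]]].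
by split; [exists (c *m invmx N) | exists (c' *m invmx N)];
  rewrite !mulmxA !mulmxKV.
Qed.

Definition transvection (w : V) : M2 := 1%:M - w *m (w^T *m Jmx).

Lemma transvection_symplectic w : symplecticmx (transvection w).
Proof.
rewrite /symplecticmx /transvection.
have -> : (1%:M - w *m (w^T *m Jmx))^T = 1%:M + Jmx *m w *m w^T.
  by rewrite linearB /= trmx1 !trmx_mul trmxK trmxJ !mulNmx opprK.
rewrite mulmxDl mul1mx mulmxBr mulmx1 mulmxDl.
have -> : Jmx *m w *m w^T *m Jmx *m (w *m (w^T *m Jmx))
   = Jmx *m w *m (w^T *m Jmx *m w) *m (w^T *m Jmx) by rewrite !mulmxA.
by rewrite Jmx_isotropic mulmx0 mul0mx addr0 !mulmxA addrK.
Qed.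

Lemma transvectionE (u v : V) : u^T *m Jmx *m v = 1%:M ->
  transvection (v - u) *m u = v.
Proof.
move=> huv.
have hvu : v^T *m Jmx *m u = - 1%:M.
  have := congr1 trmx huv.
  by rewrite !trmx_mul trmxK trmxJ trmx1 mulNmx mulmxN mulmxA => <-; rewrite opprK.
rewrite /transvection mulmxBl mul1mx -!mulmxA.
have -> : (v - u)^T *m (Jmx *m u) = - 1%:M.
  by rewrite linearB /= mulmxBl !mulmxA Jmx_isotropic subr0 hvu.
by rewrite mulmxN mulmx1 opprK addrC subrK.
Qed.

Definition sl2_mx (a b c d : 'I_n -> int) : M2 :=
  block_mx (diag_mx (\row_i a i)) (diag_mx (\row_i b i))
           (diag_mx (\row_i c i)) (diag_mx (\row_i d i)).

Lemma sl2_mx_symplectic a b c d : (forall i, a i * d i - b i * c i = 1) ->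
  symplecticmx (sl2_mx a b c d).
Proof.
move=> det1; rewrite /symplecticmx /sl2_mx /Jmx tr_block_mx !tr_diag_mx.
rewrite !mulmx_block !mulmx0 !mulmx1 !mulmxN !mulmx1 !addr0 !add0r !mulNmx.
congr block_mx; apply/matrixP => i j; rewrite !mul_diag_mx !mxE;
  case: (i == j); rewrite ?mulr1n ?mulr0n ?mulr0 ?oppr0 ?addr0 // -?(det1 i); ring.
Qed.

Lemma sl2_mx_col a b c d (X Y : 'cV[int]_n) :
  sl2_mx a b c d *m col_mx X Y =
  col_mx (\col_i (a i * X i 0 + b i * Y i 0)) (\col_i (c i * X i 0 + d i * Y i 0)).
Proof.
rewrite /sl2_mx mul_block_col !mul_diag_mx.
by congr col_mx; apply/matrixP => i j; rewrite !mxE (ord1 j).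
Qed.

Definition shear_mx (S : 'M[int]_n) : M2 := block_mx 1%:M 0 S 1%:M.

Lemma shear_mx_symplectic S : S^T = S -> symplecticmx (shear_mx S).
Proof.
move=> symS; rewrite /symplecticmx /shear_mx /Jmx tr_block_mx symS trmx0 trmx1.
rewrite !mulmx_block !mulmx0 !mul0mx !mulmx1 !mul1mx !mulmxN !mulmx1 !addr0 !add0r.
by rewrite mul1mx mul0mx addr0 addNr.
Qed.

Lemma shear_mx_col S (X Y : 'cV[int]_n) :
  shear_mx S *m col_mx X Y = col_mx X (S *m X + Y).
Proof. by rewrite /shear_mx mul_block_col !mul1mx mul0mx addr0. Qed.

Definition diag_block_mx (A B : 'M[int]_n) : M2 := block_mx A 0 0 B.

Lemma diag_block_mx_symplectic A B :
  A^T *m B = 1%:M -> symplecticmx (diag_block_mx A B).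
Proof.
move=> hAB; have hBA : B^T *m A = 1%:M by rewrite -[A]trmxK -trmx_mul hAB trmx1.
rewrite /symplecticmx /diag_block_mx /Jmx tr_block_mx !trmx0 !mulmx_block.
by rewrite !mulmx0 !mul0mx !mulmx1 !mulmxN !mulmx1 !addr0 !add0r !mul0mx hAB mulNmx hBA.
Qed.

Lemma diag_block_mx_col A B (X Y : 'cV[int]_n) :
  diag_block_mx A B *m col_mx X Y = col_mx (A *m X) (B *m Y).
Proof. by rewrite /diag_block_mx mul_block_col !mul0mx addr0 add0r. Qed.

End Symplectic.

Arguments symplecticmx_unit {n M}.
Arguments onto2_symplecticmx {n N P Q}.
Arguments symplecticmx_trmx {n M}.
Arguments sform_symplecticmx {n N P Q}.
Arguments sl2_mx_symplectic {n a b c d}.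
Arguments shear_mx_symplectic {n S}.

Lemma sl2_annihilator (x y : int) :
  exists a b c d : int, a * d - b * c = 1 /\ c * x + d * y = 0.
Proof.
have [/eqP g0 | g_neq0] := eqVneq (gcdz x y) 0.
  by move: g0; rewrite gcdz_eq0 => /andP [/eqP -> /eqP ->]; exists 1, 0, 0, 1.
have [u [v bezout]] := Bezoutz x y.
set g := gcdz x y in g_neq0 bezout.
have xg : ((x %/ g)%Z * g = x) by apply: divzK; exact: dvdz_gcdl.
have yg : ((y %/ g)%Z * g = y) by apply: divzK; exact: dvdz_gcdr.
exists u, v, (- (y %/ g)%Z), (x %/ g)%Z; split.
  apply: (mulIf g_neq0); rewrite mul1r -[X in _ = X]bezout.
  by rewrite -[in X in _ = X]xg -[in X in _ = X]yg; ring.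
transitivity (- (y %/ g)%Z * ((x %/ g)%Z * g) + (x %/ g)%Z * ((y %/ g)%Z * g)).
  by rewrite xg yg.
ring.
Qed.

Lemma sl2_annihilator_col n (msk : pred 'I_n) (X Y : 'cV[int]_n) :
  exists a b c d : 'I_n -> int,
  [/\ forall i, a i * d i - b i * c i = 1,
      forall i, ~~ msk i -> [/\ a i = 1, b i = 0, c i = 0 & d i = 1] &
      forall i, msk i -> c i * X i 0 + d i * Y i 0 = 0].
Proof.
have pointwise i : exists t : int * int * int * int,
    let: (a, b, c, d) := t in [/\ a * d - b * c = 1,
      ~~ msk i -> [/\ a = 1, b = 0, c = 0 & d = 1] &
      msk i -> c * X i 0 + d * Y i 0 = 0].
  case: (boolP (msk i)) => mi.
    have [a [b [c [d [det1 kill]]]]] := sl2_annihilator (X i 0) (Y i 0).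
    by exists (a, b, c, d); split.
  by exists (1, 0, 0, 1); split; rewrite ?mulr1 ?mulr0 ?subr0.
have [t ht] := fin_all_exists pointwise.
exists (fun i => (t i).1.1.1), (fun i => (t i).1.1.2), (fun i => (t i).1.2),
  (fun i => (t i).2).
by split => i; have := ht i; case: (t i) => [[[a b] c] d] /= [].
Qed.

Section Reduction.
Variable m : nat.
Local Notation n := m.+1.
Local Notation V := ('cV[int]_(n + n)).

Definition e0 : 'cV[int]_n := delta_mx 0 0.
Definition f0 : V := col_mx 0 e0.

Lemma mulmx_e0 p (A : 'M[int]_(p, n)) i j : (A *m e0) i j = A i 0.
Proof.
rewrite !mxE (bigD1 ord0) //= big1 ?addr0; first by rewrite !mxE (ord1 j) !eqxx mulr1.
by move=> k /negbTE k0; rewrite !mxE k0 mulr0.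
Qed.

Lemma f0_lshift j : f0 (lshift n j) 0 = 0.
Proof. by rewrite col_mxEu mxE. Qed.

Lemma f0_rshift j : f0 (rshift n j) 0 = (j == 0)%:R.
Proof. by rewrite col_mxEd mxE eqxx andbT. Qed.

Lemma sform_f0 (P : V) : sform P f0 = P (lshift n 0) 0.
Proof.
by rewrite /sform -{1}[P]vsubmxK /f0 Jmx_col mulmx0 subr0 mulmx_e0 !mxE.
Qed.

Lemma sl2_mx_f0 a b c d : b 0 = 0 -> d 0 = 1 -> sl2_mx a b c d *m f0 = f0.
Proof.
move=> b0 d0; rewrite /f0 sl2_mx_col; congr col_mx; apply/matrixP => i j;
  rewrite (ord1 j) !mxE; case: (eqVneq i 0) => [->|i0] /=;
  by rewrite ?b0 ?d0 !mulr0 ?mulr1 ?add0r.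
Qed.

Definition reduced (P Q : V) :=
  [/\ Q = f0, forall j, P (rshift n j) 0 = 0 &
      forall j : 'I_n, j != 0 -> 0 <= P (lshift n j) 0 < P (lshift n 0) 0].

Definition reducible (P Q : V) :=
  exists2 M, symplecticmx M & reduced (M *m P) (M *m Q).

Lemma reducible_mul (N : 'M[int]_(n + n)) (P Q : V) :
  symplecticmx N -> reducible (N *m P) (N *m Q) -> reducible P Q.
Proof.
by move=> sN [M sM red]; exists (M *m N); [exact: symplecticmx_mul | rewrite -!mulmxA].
Qed.
Arguments reducible_mul [N P Q].

Lemma reducible_mod (X : 'cV[int]_n) : 0 < X 0 0 -> reducible (col_mx X 0) f0.
Proof.
move=> X0_gt0.
pose k : 'cV[int]_n := \col_i (if i == 0 then 0 else - divz (X i 0) (X 0 0)).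
have k_e0 : k^T *m e0 = 0 by apply/matrixP => i j; rewrite !ord1 mulmx_e0 !mxE eqxx.
pose A := 1%:M + k *m e0^T; pose B := 1%:M - e0 *m k^T.
have AB : A^T *m B = 1%:M.
  have -> : A^T = 1%:M + e0 *m k^T by rewrite linearD /= trmx1 trmx_mul trmxK.
  rewrite /B mulmxDl mul1mx mulmxBr mulmx1 -!mulmxA (mulmxA k^T) k_e0.
  by rewrite mul0mx mulmx0 subr0 subrK.
exists (diag_block_mx A B); first exact: diag_block_mx_symplectic.
have AX j : (A *m X) j 0 = if j == 0 then X 0 0 else modz (X j 0) (X 0 0).
  rewrite /A mulmxDl mul1mx -mulmxA /e0 trmx_delta -rowE !mxE big_ord1 !mxE.
  case: eqP => [->|_]; first by rewrite mul0r addr0.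
  by rewrite {1}(divz_eq (X j 0) (X 0 0)) mulNr addrAC subrr add0r.
rewrite /f0 !diag_block_mx_col !mulmx0 /B mulmxBl mul1mx -mulmxA k_e0 mulmx0 subr0.
split=> // [j | j j0]; first by rewrite col_mxEd mxE.
rewrite !col_mxEu !AX eqxx (negbTE j0) modz_ge0 ?gt_eqF //=.
by rewrite -[X in _ < X]gtr0_norm // ltz_mod ?gt_eqF.
Qed.

Lemma reducible_shear (X Y : 'cV[int]_n) (c : 'rV[int]_n) :
  c *m X = 1%:M -> 0 < X 0 0 -> reducible (col_mx X Y) f0.
Proof.
move=> cX X0_gt0; set a := (Y^T *m X) 0 0.
(* The symmetric solution of S X = - Y when c X = 1. *)
pose S := - (Y *m c + c^T *m Y^T) + a *: (c^T *m c).
have S_sym : S^T = S.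
  rewrite /S linearD linearN linearZ /= linearD /= !trmx_mul !trmxK.
  by rewrite [c^T *m Y^T + _]addrC.
have YX : Y^T *m X = a%:M.
  by apply/matrixP => i j; rewrite !ord1 [in RHS]mxE eqxx mulr1n.
have SX : S *m X = - Y.
  rewrite /S mulmxDl mulNmx mulmxDl -!mulmxA cX YX mulmx1 mul_mx_scalar.
  by rewrite -scalemxAl -mulmxA cX mulmx1 opprD subrK.
apply: (reducible_mul (shear_mx_symplectic S_sym)).
rewrite shear_mx_col SX addNr /f0 shear_mx_col mulmx0 add0r.
exact: reducible_mod.
Qed.

Lemma reducible_f0 (P : V) : onto2 P f0 -> 0 < sform P f0 -> reducible P f0.
Proof.
rewrite -[P]vsubmxK sform_f0 col_mxEu.
set X := usubmx P; set Y := dsubmx P => onto X0_gt0.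
have [a [b [c [d [det1 id_at0 kill]]]]] :=
  sl2_annihilator_col _ (fun i : 'I_n => i != 0) X Y.
have [a0 b0 _ d0] : [/\ a 0 = 1, b 0 = 0, c 0 = 0 & d 0 = 1].
  by apply: id_at0; rewrite eqxx.
have sN := sl2_mx_symplectic det1.
apply: (reducible_mul sN); have := onto2_symplecticmx sN onto.
rewrite sl2_mx_f0 // sl2_mx_col.
set X' := \col_i _; set Y' := \col_i _ => [[[r [rP rf0]] _]].
have Y'0 j : j != 0 -> Y' j 0 = 0 by move=> j0; rewrite mxE kill.
rewrite -[r]hsubmxK mul_row_col in rP.
rewrite -[r]hsubmxK /f0 mul_row_col mulmx0 add0r in rf0.
have r2_0 : rsubmx r 0 0 = 0.
  by move/matrixP: rf0 => /(_ 0 0); rewrite mulmx_e0 !mxE.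
have r2Y' : rsubmx r *m Y' = 0.
  apply/matrixP => i j; rewrite !ord1 !mxE big1 // => k _.
  by case: (eqVneq k 0) => [->|k0]; rewrite ?r2_0 ?mul0r ?Y'0 ?mulr0.
apply: (reducible_shear _ _ (lsubmx r)); first by rewrite -rP r2Y' addr0.
by rewrite mxE a0 b0 mul1r mul0r addr0.
Qed.

Lemma reducible_onto2 (P Q : V) : onto2 P Q -> 0 < sform P Q -> reducible P Q.
Proof.
move=> onto pos.
have [a [b [c [d [det1 _ kill]]]]] :=
  sl2_annihilator_col _ predT (usubmx Q) (dsubmx Q).
have sN := sl2_mx_symplectic det1.
set G : 'cV[int]_n := \col_i (a i * usubmx Q i 0 + b i * dsubmx Q i 0).
have NQ : sl2_mx a b c d *m Q = col_mx G 0.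
  rewrite -{1}[Q]vsubmxK sl2_mx_col; congr col_mx.
  by apply/matrixP => i j; rewrite [LHS]mxE [RHS]mxE kill.
apply: (reducible_mul sN).
have := onto2_symplecticmx sN onto; rewrite -(sform_symplecticmx sN) NQ in pos *.
move=> onto'; have [_ [r [_ rG]]] := onto'.
rewrite -[r]hsubmxK mul_row_col mulmx0 addr0 in rG.
set u := col_mx G 0; pose v := col_mx e0 (lsubmx r)^T.
have uv : u^T *m Jmx *m v = 1%:M.
  by rewrite Jmx_col trmx0 mul0mx subr0 -trmx_mul rG trmx1.
have vf0 : v^T *m Jmx *m f0 = 1%:M.
  rewrite Jmx_col mulmx0 subr0.
  by apply/matrixP => i j; rewrite !ord1 mulmx_e0 !mxE eqxx.
pose T := transvection (f0 - v) *m transvection (v - u).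
have sT : symplecticmx T by apply: symplecticmx_mul; apply: transvection_symplectic.
have Tu : T *m u = f0 by rewrite -mulmxA !transvectionE.
apply: (reducible_mul sT); rewrite Tu; apply: reducible_f0.
  by rewrite -Tu; apply: onto2_symplecticmx.
by rewrite -Tu sform_symplecticmx.
Qed.

End Reduction.

Arguments reducible_onto2 {m P Q}.

Lemma Im_conj_mul_rect (C : numClosedFieldType) (x y u v : C) :
  x \is Num.real -> y \is Num.real -> u \is Num.real -> v \is Num.real ->
  'Im ((x + 'i * y)^* * (u + 'i * v)) = x * v - y * u.
Proof.
move=> xR yR uR vR; rewrite conjC_rect //.
have -> : (x - 'i * y) * (u + 'i * v) = (x * u + y * v) + 'i * (x * v - y * u).
  transitivity (x * u + 'i * (x * v - y * u) - 'i ^+ 2 * (y * v)); first ring.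
  by rewrite sqrCi; ring.
by rewrite Im_rect ?rpredD ?rpredN ?rpredM.
Qed.

Lemma intr_rect_inj (C : numClosedFieldType) (a b c d : int) :
  (a%:~R + 'i * b%:~R : C) = c%:~R + 'i * d%:~R -> a = c /\ b = d.
Proof.
move=> e; have := congr1 (fun z => 'Re z) e; have := congr1 (fun z => 'Im z) e.
by rewrite /= !Re_rect ?Im_rect ?realz // => /eqP; rewrite eqr_int => /eqP -> /eqP;
  rewrite eqr_int => /eqP ->.
Qed.

Section Coordinates.
Context {n : nat}.
Local Notation V := ('cV[int]_(n + n)).

Definition H1_of_row (r : 'rV[int]_(n + n)) : H1 n := (lsubmx r, rsubmx r).

Lemma H1_of_row_is_zmod_morphism : zmod_morphism H1_of_row.
Proof. by move=> r s; rewrite /H1_of_row !linearB. Qed.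
HB.instance Definition _ :=
  GRing.isZmodMorphism.Build _ _ H1_of_row H1_of_row_is_zmod_morphism.

Definition row_of_H1 (v : H1 n) : 'rV[int]_(n + n) := row_mx v.1 v.2.

Lemma row_of_H1K : cancel row_of_H1 H1_of_row.
Proof. by case=> a b; rewrite /H1_of_row /row_of_H1 row_mxKl row_mxKr. Qed.

Lemma H1_of_rowK : cancel H1_of_row row_of_H1.
Proof. exact: hsubmxK. Qed.

Lemma stdxE (j : 'I_n) : stdx j = H1_of_row (delta_mx 0 (lshift n j)).
Proof.
by congr pair; apply/matrixP => a b; rewrite !mxE (ord1 a) eqxx ?eq_lshift ?eq_rlshift.
Qed.

Lemma stdyE (j : 'I_n) : stdy j = H1_of_row (delta_mx 0 (rshift n j)).
Proof.
by congr pair; apply/matrixP => a b; rewrite !mxE (ord1 a) eqxx ?eq_lrshift ?eq_rshift.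
Qed.

Lemma inter_H1_of_row (r s : 'rV[int]_(n + n)) :
  inter (H1_of_row r) (H1_of_row s) = (r *m Jmx *m s^T) 0 0.
Proof.
have rowT (t : 'rV[int]_(n + n)) : t^T = col_mx (lsubmx t)^T (rsubmx t)^T.
  by rewrite -tr_row_mx hsubmxK.
rewrite -[in RHS](trmxK r) !rowT Jmx_col !trmxK /inter [RHS]mxE !mxE -sumrB.
by apply: eq_bigr => i _; rewrite !mxE.
Qed.

Lemma sum_rows_H1_of_row (M : 'M[int]_(n + n)) (c1 c2 : 'rV[int]_n) :
  \sum_i (H1_of_row (row (lshift n i) M) *~ c1 0 i +
          H1_of_row (row (rshift n i) M) *~ c2 0 i) =
  H1_of_row (row_mx c1 c2 *m M).
Proof.
rewrite mulmx_sum_row raddf_sum big_split_ord big_split /=.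
by congr (_ + _); apply: eq_bigr => i _;
  rewrite ?row_mxEl ?row_mxEr -[X in H1_of_row (X *: _)]intz scaler_int raddfMz.
Qed.

Lemma symplectic_basis_rows (M : 'M[int]_(n + n)) : symplecticmx M ->
  is_symplectic_basis (fun i => H1_of_row (row (lshift n i) M))
                      (fun i => H1_of_row (row (rshift n i) M)).
Proof.
move=> sM; split=> [v | i j].
  exists (lsubmx (row_of_H1 v *m invmx M), rsubmx (row_of_H1 v *m invmx M)).
  have M_unit := symplecticmx_unit sM.
  split=> [|[c1 c2]]; rewrite /= sum_rows_H1_of_row.
    by rewrite hsubmxK mulmxKV // row_of_H1K.
  move=> ->; rewrite H1_of_rowK mulmxK //.
  by rewrite row_mxKl row_mxKr.
have entry k l : (row k M *m Jmx *m (row l M)^T) 0 0 = Jmx k l.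
  rewrite !rowE trmx_mul trmx_delta !mulmxA -(mulmxA _ M) -(mulmxA _ (M *m Jmx)).
  by rewrite (symplecticmx_trmx sM) -rowE -colE !mxE.
by rewrite !inter_H1_of_row !entry /Jmx block_mxEur block_mxEul block_mxEdr !mxE.
Qed.

Section Character.
Variable chi : {additive H1 n -> algC}.

Definition coords_of (P Q : V) := forall r,
  chi (H1_of_row r) = ((r *m P) 0 0)%:~R + 'i * ((r *m Q) 0 0)%:~R.

Lemma gaussian_coords :
  (forall v, exists a b : int, chi v = a%:~R + 'i * b%:~R) ->
  exists P Q, coords_of P Q.
Proof.
move=> gauss.
have at_delta k : exists ab : int * int,
    chi (H1_of_row (delta_mx 0 k)) = ab.1%:~R + 'i * ab.2%:~R.
  by have [a [b e]] := gauss (H1_of_row (delta_mx 0 k)); exists (a, b).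
have [ab chi_delta] := fin_all_exists at_delta.
exists (\col_k (ab k).1), (\col_k (ab k).2) => r.
rewrite [in LHS](row_sum_delta r) !raddf_sum !mxE !rmorph_sum mulr_sumr -big_split.
apply: eq_bigr => k _; rewrite -[X in _ (_ (X *: _))]intz scaler_int !raddfMz.
rewrite chi_delta !mxE !rmorphM /=.
by rewrite -mulrzr mulrC mulrDr mulrCA.
Qed.

Lemma omega_coords P Q : coords_of P Q -> omega chi = (sform P Q)%:~R.
Proof.
move=> chiE.
have chi_delta k : chi (H1_of_row (delta_mx 0 k)) = (P k 0)%:~R + 'i * (Q k 0)%:~R.
  by rewrite chiE -!rowE !mxE.
rewrite /omega /sform -{1}[P]vsubmxK -{1}[Q]vsubmxK Jmx_col !mxE -sumrB rmorph_sum.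
apply: eq_bigr => j _; rewrite stdxE stdyE !chi_delta Im_conj_mul_rect ?realz //.
by rewrite !mxE rmorphB !rmorphM [(Q _ _)%:~R * _]mulrC.
Qed.

Lemma onto2_coords P Q : coords_of P Q ->
  (exists v, chi v = 1) -> (exists v, chi v = 'i) -> onto2 P Q.
Proof.
have entries (v : H1 n) (a b : int) : coords_of P Q ->
    chi v = a%:~R + 'i * b%:~R -> row_of_H1 v *m P = a%:M /\ row_of_H1 v *m Q = b%:M.
  move=> chiE; rewrite -[v]row_of_H1K chiE row_of_H1K => /intr_rect_inj [<- <-].
  by split; apply/matrixP => i j; rewrite !ord1 [RHS]mxE.
move=> chiE [v1 chi1] [vi chii]; split; [exists (row_of_H1 v1) | exists (row_of_H1 vi)].
  by rewrite -(raddf0 (@scalar_mx _ 1)); apply: entries; rewrite // chi1 mulr0 addr0.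
by rewrite -(raddf0 (@scalar_mx _ 1)); apply: entries; rewrite // chii mulr1 add0r.
Qed.

End Character.

End Coordinates.

Arguments omega_coords {n chi P Q}.
Arguments onto2_coords {n chi P Q}.

Theorem mainTheorem14 (n : nat) (hn : (2 <= n)%N)
  (chi : {additive H1 n -> algC})
  (himg : forall z : algC,
      (exists v : H1 n, chi v = z) <->
      (exists a b : int, z = a%:~R + 'i * b%:~R))
  (hom : 0 < omega chi) :
  exists x y : 'I_n -> H1 n,
    is_symplectic_basis x y /\
    (forall j : 'I_n, nat_of_ord j = 0%N ->
        chi (x j) = omega chi /\ chi (y j) = 'i) /\
    (forall j : 'I_n, (0 < nat_of_ord j)%N ->
        chi (y j) = 0 /\
        exists a : int, chi (x j) = a%:~R /\ 0 <= a /\ a%:~R < omega chi).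
Proof.
case: n hn chi himg hom => [//|m] _ chi himg hom.
have [P [Q chiE]] : exists P Q, coords_of chi P Q.
  by apply: gaussian_coords => v; apply/himg; exists v.
have onto : onto2 P Q.
  apply: (onto2_coords chiE); apply/himg.
    by exists 1, 0; rewrite mulr0 addr0.
  by exists 0, 1; rewrite mulr1 add0r.
rewrite (omega_coords chiE) ltr0z in hom *.
have [M sM [MQ MP_rshift MP_lshift]] := reducible_onto2 onto hom.
have MP0 : (M *m P) (lshift _ 0) 0 = sform P Q.
  by rewrite -(sform_symplecticmx sM) MQ sform_f0.
have chi_row k : chi (H1_of_row (row k M)) =
    ((M *m P) k 0)%:~R + 'i * ((M *m Q) k 0)%:~R by rewrite chiE -!row_mul !mxE.
exists (fun i => H1_of_row (row (lshift _ i) M)),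
  (fun i => H1_of_row (row (rshift _ i) M)).
split; first exact: symplectic_basis_rows.
split=> j j0; rewrite !chi_row MQ f0_lshift f0_rshift.
  have -> : j = 0 by apply: val_inj.
  by rewrite MP0 MP_rshift eqxx mulr0z mulr0 addr0 add0r mulr1.
have j_neq0 : j != 0 by rewrite -(inj_eq val_inj) /= -lt0n.
rewrite MP_rshift (negbTE j_neq0) mulr0 addr0; split=> //.
have /andP [ge0 lt] := MP_lshift j j_neq0.
by exists ((M *m P) (lshift _ j) 0); rewrite addr0 ltr_int -MP0.
Qed.
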